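(* For each $k\in\{1,2\}$ there exist a probability space and random variables $A_1,A_2,B_1,B_2,C_k$ on it, each taking values in $\{1,-1\}$, such that $\langle A_i\rangle=\langle B_i\rangle=\langle C_k\rangle=0$ and $\langle A_iB_j\rangle=\langle A_iC_k\rangle=\langle B_iC_k\rangle=0$ for all $i,j\in\{1,2\}$, and moreover: for $k=1$: $\langle A_1B_1C_1\rangle=-1$, $\langle A_2B_2C_1\rangle=-1$, $\langle A_1B_2C_1\rangle=\langle A_2B_1C_1\rangle=0$; for $k=2$: $\langle A_2B_1C_2\rangle=-1$, $\langle A_1B_2C_2\rangle=+1$, $\langle A_2B_2C_2\rangle=\langle A_1B_1C_2\rangle=0$. Furthermore, in every such model for $k=1$ one has $\langle A_1A_2B_1B_2\rangle=1$, in every such model for $k=2$ one has $\langle A_1A_2B_1B_2\rangle=-1$, and the two models can be chosen so that all other correlations among $A_1,A_2,B_1,B_2$ (i.e. the joint distribution of every proper subfamily of these four variables, including $\langle A_1A_2\rangle=\langle B_1B_2\rangle=0$ and $\langle A_iB_1B_2\rangle=\langle B_iA_1A_2\rangle=0$) coincide in the two models.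
   Context: $\langle\cdot\rangle$ denotes expectation. These correlations are the quantum-mechanical predictions of the Greenberger–Horne–Shimony–Zeilinger state $\tfrac{1}{\sqrt2}(|+++\rangle-|---\rangle)$ (in the eigenbasis of $\sigma_z$ for three spin-$1/2$ particles) for the observables $A_1=-\sigma^1_x$, $A_2=-\sigma^1_y$, $B_1=\sigma^2_y$, $B_2=\sigma^2_x$, $C_1=\sigma^3_y$, $C_2=\sigma^3_x$, where $\sigma^i_k$ are Pauli matrices on particle $i$; the compatible sets (contexts) are those containing at most one $A$, one $B$ and one $C$. Thus each model reproduces all quantum predictions for the four contexts $\{A_i,B_j,C_k\}$ with the given $k$. *)

From HB Require Import structures.
From mathcomp Require Import all_boot all_order all_algebra.
From mathcomp Require Import all_classical all_reals all_analysis.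
Set Implicit Arguments. Unset Strict Implicit. Unset Printing Implicit Defensive.
Import Order.TTheory GRing.Theory Num.Theory.
Local Open Scope ring_scope.
Local Open Scope classical_set_scope.
Local Open Scope ereal_scope.

Definition pm1 {T : Type} {R : realType} (X : T -> R) : Prop :=
  forall w, (X w = 1 \/ X w = -1)%R.

Definition common_model {d} {T : measurableType d} {R : realType}
  (P : probability T R) (A1 A2 B1 B2 C : {RV P >-> R}) : Prop :=
  [/\ pm1 A1, pm1 A2, pm1 B1, pm1 B2 & pm1 C] /\
  [/\ 'E_P[(A1)%R] = 0%E, 'E_P[(A2)%R] = 0%E, 'E_P[(B1)%R] = 0%E, 'E_P[(B2)%R] = 0%E
    & 'E_P[(C)%R] = 0%E] /\
  [/\ 'E_P[(A1 \* B1)%R] = 0%E, 'E_P[(A1 \* B2)%R] = 0%E, 'E_P[(A2 \* B1)%R] = 0%E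
    & 'E_P[(A2 \* B2)%R] = 0%E] /\
  [/\ 'E_P[(A1 \* C)%R] = 0%E, 'E_P[(A2 \* C)%R] = 0%E, 'E_P[(B1 \* C)%R] = 0%E
    & 'E_P[(B2 \* C)%R] = 0%E].

Definition model1 {d} {T : measurableType d} {R : realType}
  (P : probability T R) (A1 A2 B1 B2 C : {RV P >-> R}) : Prop :=
  common_model A1 A2 B1 B2 C /\
  [/\ 'E_P[(A1 \* B1 \* C)%R] = (-1)%:E, 'E_P[(A2 \* B2 \* C)%R] = (-1)%:E,
      'E_P[(A1 \* B2 \* C)%R] = 0%E & 'E_P[(A2 \* B1 \* C)%R] = 0%E].

Definition model2 {d} {T : measurableType d} {R : realType}
  (P : probability T R) (A1 A2 B1 B2 C : {RV P >-> R}) : Prop :=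
  common_model A1 A2 B1 B2 C /\
  [/\ 'E_P[(A2 \* B1 \* C)%R] = (-1)%:E, 'E_P[(A1 \* B2 \* C)%R] = 1%E,
      'E_P[(A2 \* B2 \* C)%R] = 0%E & 'E_P[(A1 \* B1 \* C)%R] = 0%E].

Definition fam4 {T : Type} {R : realType} (A1 A2 B1 B2 : T -> R)
  (i : 'I_4) : T -> R :=
  match val i with 0 => A1 | 1 => A2 | 2 => B1 | _ => B2 end.

Definition joint_event {T : Type} {R : realType} (F : 'I_4 -> T -> R)
  (S : {set 'I_4}) (s : 'I_4 -> R) : set T :=
  [set w | forall i, i \in S -> (F i w = s i)%R].

From HB Require Import structures.
From mathcomp Require Import all_boot all_order all_algebra.
From mathcomp Require Import all_classical all_reals all_analysis.
From mathcomp Require Import measurable_realfun ring lra.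
Import Order.TTheory GRing.Theory Num.Theory.
Local Open Scope ring_scope.
Local Open Scope classical_set_scope.
Local Open Scope ereal_scope.

(* Since [C^2 = 1], the product [A1 A2 B1 B2] equals (A1 B1 C)(A2 B2 C) for
   k = 1 and (A2 B1 C)(A1 B2 C) for k = 2: a product of two triple correlators
   with mean [-1] or [+1].  For [U, V] with values in [-1, 1] and means [-1],
   the bounds [U V <= 1] and [0 <= (1 + U)(1 + V) = 1 + U + V + U V] force
   [E[U V] = 1]; replacing [V] by [-V] handles mean [+1].
   Both models live on three fair bits x0, x1, x2: A1, A2, B1 are their spins,
   and B2 is the spin of the parity x0 + x1 + x2, negated for k = 2.  Flipping
   the bit of a dropped A1, A2 or B1 negates B2 and fixes the other variables,
   so every proper subfamily of (A1, A2, B1, B2) has the same law in both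
   models. *)

Lemma pm1_norm_le1 {T : Type} {R : realType} (X : T -> R) :
  pm1 X -> forall w, (`|X w| <= 1)%R.
Proof. by move=> hX w; case: (hX w) => ->; rewrite ?normrN normr1. Qed.

Lemma norm_le1M {T : Type} {R : realType} {X Y : T -> R} :
  (forall w, `|X w| <= 1)%R -> (forall w, `|Y w| <= 1)%R ->
  forall w, (`|(X \* Y) w| <= 1)%R.
Proof. by move=> X1 Y1 w; rewrite normrM mulr_ile1. Qed.

Section unit_bounded_variables.
Context d (T : measurableType d) (R : realType) (P : probability T R).
Implicit Types U V X : T -> R.

Lemma Lfun1_norm_le1 {X} : measurable_fun setT X ->
  (forall w, `|X w| <= 1)%R -> X \in Lfun P 1.
Proof.
move=> mX X1; apply/Lfun1_integrable.
apply: (@le_integrable _ _ _ P setT _ (EFin \o X) (EFin \o cst 1%R)) => //.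
- exact/measurable_EFinP.
- by move=> x _ /=; rewrite lee_fin normr1.
- exact/Lfun1_integrable/Lfun_cst.
Qed.

Lemma expectationM_eq1 {U V} :
  measurable_fun setT U -> measurable_fun setT V ->
  (forall w, `|U w| <= 1)%R -> (forall w, `|V w| <= 1)%R ->
  'E_P[U] = (-1)%:E -> 'E_P[V] = (-1)%:E -> 'E_P[(U \* V)%R] = 1.
Proof.
move=> mU mV U1 V1 EU EV.
have UV1 := norm_le1M U1 V1.
have LU := Lfun1_norm_le1 mU U1; have LV := Lfun1_norm_le1 mV V1.
have LUV := Lfun1_norm_le1 (measurable_funM mU mV) UV1.
have [r EUV] : exists r, 'E_P[(U \* V)%R] = r%:E.
  by exists (fine 'E_P[(U \* V)%R]); rewrite fineK // expectation_fin_num.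
have le1 : 0 <= 'E_P[(cst 1 \- U \* V)%R].
  apply: expectation_ge0 => w.
  by move: (UV1 w); rewrite ler_norml subr_ge0 => /andP[].
have ge1 : 0 <= 'E_P[((cst 1 \+ U) \* (cst 1 \+ V))%R].
  apply: expectation_ge0 => w /=.
  move: (U1 w) (V1 w); rewrite !ler_norml => /andP[? _] /andP[? _].
  by apply: mulr_ge0; lra.
rewrite expectationB ?Lfun_cst // expectation_cst EUV -EFinB lee_fin in le1.
have expand : ((cst 1 \+ U) \* (cst 1 \+ V) = cst 1 \+ U \+ V \+ U \* V)%R.
  by apply/funext => w /=; ring.
rewrite expand !expectationD ?rpredD ?Lfun_cst // in ge1.
rewrite expectation_cst EU EV EUV in ge1.
rewrite -!EFinD lee_fin in ge1.
by rewrite EUV; congr EFin; lra.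
Qed.

Lemma expectationM_eqN1 {U V} :
  measurable_fun setT U -> measurable_fun setT V ->
  (forall w, `|U w| <= 1)%R -> (forall w, `|V w| <= 1)%R ->
  'E_P[U] = (-1)%:E -> 'E_P[V] = 1 -> 'E_P[(U \* V)%R] = (-1)%:E.
Proof.
move=> mU mV U1 V1 EU EV.
have mNV : measurable_fun setT ((-1)%R \o* V) by exact: measurable_funM.
have NV1 w : (`|((-1)%R \o* V) w| <= 1)%R by rewrite /= mulrN1 normrN.
have LUV := Lfun1_norm_le1 (measurable_funM mU mV) (norm_le1M U1 V1).
have ENV : 'E_P[(-1)%R \o* V] = (-1)%:E.
  by rewrite expectationZl ?(Lfun1_norm_le1 mV V1) // EV mule1.
have := expectationM_eq1 mU mNV U1 NV1 EU ENV.
have -> : (U \* ((-1)%R \o* V) = (-1)%R \o* (U \* V))%R.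
  by apply/funext => w /=; ring.
by rewrite expectationZl // EFinN mulN1e => /(congr1 oppe); rewrite oppeK.
Qed.
End unit_bounded_variables.

Section four_point_correlation.
Context d (T : measurableType d) (R : realType) (P : probability T R).
Variables A1 A2 B1 B2 C : {RV P >-> R}.

Lemma model1_expectation_A1A2B1B2 : model1 A1 A2 B1 B2 C ->
  'E_P[(A1 \* A2 \* B1 \* B2)%R] = 1.
Proof.
move=> [[[pA1 pA2 pB1 pB2 pC] _] [E1 E2 _ _]].
have -> : (A1 \* A2 \* B1 \* B2 = (A1 \* B1 \* C) \* (A2 \* B2 \* C))%R.
  by apply/funext => w /=; case: (pC w) => ->; ring.
apply: expectationM_eq1 E1 E2;
  by [apply: measurable_funM | do !apply: norm_le1M; exact: pm1_norm_le1].
Qed.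

Lemma model2_expectation_A1A2B1B2 : model2 A1 A2 B1 B2 C ->
  'E_P[(A1 \* A2 \* B1 \* B2)%R] = (-1)%:E.
Proof.
move=> [[[pA1 pA2 pB1 pB2 pC] _] [E1 E2 _ _]].
have -> : (A1 \* A2 \* B1 \* B2 = (A2 \* B1 \* C) \* (A1 \* B2 \* C))%R.
  by apply/funext => w /=; case: (pC w) => ->; ring.
apply: expectationM_eqN1 E1 E2;
  by [apply: measurable_funM | do !apply: norm_le1M; exact: pm1_norm_le1].
Qed.
End four_point_correlation.

Section uniform_nat.
Context {R : realType} (n : nat).

Definition uniform_weight : {nonneg R} := (((n.+1%:R : R)^-1)%:nng)%R.

Definition uniform_nat : set nat -> \bar R :=
  msum (fun k => mscale uniform_weight (@dirac _ nat k R)) n.+1.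

HB.instance Definition _ := Measure.on uniform_nat.

Lemma uniform_natE A :
  uniform_nat A = \sum_(k < n.+1) (n.+1%:R^-1)%:E * \d_(k : nat) A.
Proof. by []. Qed.

Lemma uniform_natT : uniform_nat setT = 1.
Proof.
rewrite uniform_natE; under eq_bigr do rewrite diracT mule1.
rewrite sumEFin sumr_const card_ord; congr EFin.
by rewrite -[LHS]mulr_natr mulVf ?pnatr_eq0.
Qed.

HB.instance Definition _ :=
  Measure_isProbability.Build _ _ R uniform_nat uniform_natT.

Lemma ge0_integral_uniform_nat (g : nat -> \bar R) : (forall k, 0 <= g k) ->
  \int[uniform_nat]_x g x = \sum_(k < n.+1) (n.+1%:R^-1)%:E * g k.
Proof.
move=> g0; rewrite ge0_integral_measure_sum //; apply: eq_bigr => k _.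
by rewrite ge0_integral_mscale //= integral_dirac //= diracT mul1e.
Qed.

Lemma expectation_uniform_nat (f : nat -> R) :
  'E_uniform_nat[f] = (\sum_(k < n.+1) f k / n.+1%:R)%:E.
Proof.
rewrite unlock integralE !ge0_integral_uniform_nat //.
under eq_bigr do rewrite funeposE -EFin_max -EFinM.
under [X in _ - X]eq_bigr do rewrite funenegE -EFin_max -EFinM.
rewrite !sumEFin -EFinB -sumrB; congr EFin; apply: eq_bigr => k _.
rewrite -mulrBr mulrC; congr (_ * _)%R.
by rewrite /Num.max /Order.max /=; do 2![case: ifP => ?]; lra.
Qed.

Lemma uniform_nat_bij {g : 'I_n.+1 -> 'I_n.+1} {E1 E2 : set nat} :
  injective g -> (forall k : 'I_n.+1, E1 k <-> E2 (g k)) ->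
  uniform_nat E1 = uniform_nat E2.
Proof.
move=> g_inj E12; rewrite !uniform_natE [RHS](reindex_inj g_inj).
apply: eq_bigr => k _; rewrite !diracE.
suff -> : ((k : nat) \in E1) = ((g k : nat) \in E2) by [].
by apply/idP/idP => /set_mem/E12/mem_set.
Qed.

Lemma uniform_nat_joint_event {F G : 'I_4 -> nat -> R} {S : {set 'I_4}}
    {s : 'I_4 -> R} {g : 'I_n.+1 -> 'I_n.+1} : injective g ->
    (forall i (k : 'I_n.+1), i \in S -> G i (g k) = F i k) ->
  uniform_nat (joint_event F S s) = uniform_nat (joint_event G S s).
Proof.
move=> g_inj FG; apply: (uniform_nat_bij g_inj) => k.
rewrite /joint_event /=.
by split=> FS i iS; [rewrite FG | rewrite -FG] => //; exact: FS.
Qed.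
End uniform_nat.

Section models.
Context {R : realType}.

Definition nth_bit (m k : nat) : bool := odd (iter m half k).

Definition spin (b : bool) : R := if b then (-1)%R else 1%R.

Lemma pm1_spin {T : Type} (x : T -> bool) : pm1 (spin \o x).
Proof. by move=> w; rewrite /spin /=; case: (x w); [right|left]. Qed.

Lemma mfun_nat (f : nat -> R) : f \in mfun.
Proof. by rewrite inE. Qed.

Definition spinRV (x : nat -> bool) : {RV @uniform_nat R 7 >-> R} :=
  mfun_Sub (mfun_nat (spin \o x)).

Let x0 := nth_bit 0.
Let x1 := nth_bit 1.
Let x2 := nth_bit 2.

Definition a1 := spinRV x0.
Definition a2 := spinRV x1.
Definition b1 := spinRV x2.
Definition b2 := spinRV (fun k => x0 k (+) x1 k (+) x2 k).
Definition c1 := spinRV (fun k => ~~ (x0 k (+) x2 k)).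
Definition b2' := spinRV (fun k => ~~ (x0 k (+) x1 k (+) x2 k)).
Definition c2 := spinRV (fun k => ~~ (x1 k (+) x2 k)).

Ltac uniform_nat_expectation :=
  rewrite expectation_uniform_nat !big_ord_recl big_ord0 /=; congr EFin; lra.

Lemma model1_spins : model1 a1 a2 b1 b2 c1.
Proof.
repeat split; try exact: pm1_spin.
all: uniform_nat_expectation.
Qed.

Lemma model2_spins : model2 a1 a2 b1 b2' c2.
Proof.
repeat split; try exact: pm1_spin.
all: uniform_nat_expectation.
Qed.

(* Index 3 (dropping B2) needs no flip: both families share A1, A2, B1. *)
Definition flip_bit (m : nat) (k : 'I_8) : 'I_8 :=
  if (m < 3)%N then inord (if nth_bit m k then k - 2 ^ m else k + 2 ^ m)%N
  else k.

Lemma flip_bitK m : involutive (flip_bit m).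
Proof.
case: m => [|[|[|m]]] k; apply: val_inj; rewrite /flip_bit //=;
  by case: k => -[|[|[|[|[|[|[|[|k]]]]]]]] //= ?; rewrite ?inordK.
Qed.

Lemma fam4_flip_bit (j i : 'I_4) (k : 'I_8) : i != j ->
  fam4 a1 a2 b1 b2' i (flip_bit j k) = fam4 a1 a2 b1 b2 i k.
Proof.
case: j i => -[|[|[|[|j]]]] // ? [[|[|[|[|i]]]] //= ?];
  by case: k => -[|[|[|[|[|[|[|[|k]]]]]]]] //= ?; rewrite /flip_bit /= ?inordK.
Qed.

Lemma spin_models_proper_subfamily_law (S : {set 'I_4}) (s : 'I_4 -> R) :
  (S != [set: 'I_4])%SET ->
  @uniform_nat R 7 (joint_event (fam4 a1 a2 b1 b2) S s)
  = @uniform_nat R 7 (joint_event (fam4 a1 a2 b1 b2') S s).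
Proof.
move=> S_proper; have /subsetPn[j _ jS] : ~~ ([set: 'I_4] \subset S)%SET.
  by apply: contra S_proper => TS; rewrite finset.eqEsubset finset.subsetT.
apply: (uniform_nat_joint_event 7 (inv_inj (flip_bitK j))) => i k iS.
by apply: fam4_flip_bit; apply: contraNneq jS => <-.
Qed.
End models.

Theorem mainTheorem4 (R : realType) :
  (exists (d : measure_display) (T : measurableType d) (P : probability T R)
          (A1 A2 B1 B2 C : {RV P >-> R}), model1 A1 A2 B1 B2 C) /\
  (exists (d : measure_display) (T : measurableType d) (P : probability T R)
          (A1 A2 B1 B2 C : {RV P >-> R}), model2 A1 A2 B1 B2 C) /\
  (forall (d : measure_display) (T : measurableType d) (P : probability T R)
          (A1 A2 B1 B2 C : {RV P >-> R}), model1 A1 A2 B1 B2 C ->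
     'E_P[(A1 \* A2 \* B1 \* B2)%R] = 1%E) /\
  (forall (d : measure_display) (T : measurableType d) (P : probability T R)
          (A1 A2 B1 B2 C : {RV P >-> R}), model2 A1 A2 B1 B2 C ->
     'E_P[(A1 \* A2 \* B1 \* B2)%R] = (-1)%:E) /\
  (exists (d1 : measure_display) (T1 : measurableType d1) (P1 : probability T1 R)
          (A1 A2 B1 B2 C1 : {RV P1 >-> R})
          (d2 : measure_display) (T2 : measurableType d2) (P2 : probability T2 R)
          (A1' A2' B1' B2' C2 : {RV P2 >-> R}),
     model1 A1 A2 B1 B2 C1 /\ model2 A1' A2' B1' B2' C2 /\
     forall (S : {set 'I_4}) (s : 'I_4 -> R), (S != [set: 'I_4])%SET ->
       P1 (joint_event (fam4 A1 A2 B1 B2) S s)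
       = P2 (joint_event (fam4 A1' A2' B1' B2') S s)).
Proof.
split; [|split; [|split; [|split]]].
- by exists _, nat, (uniform_nat 7), a1, a2, b1, b2, c1; exact: model1_spins.
- by exists _, nat, (uniform_nat 7), a1, a2, b1, b2', c2; exact: model2_spins.
- by move=> d T P A1 A2 B1 B2 C; exact: model1_expectation_A1A2B1B2.
- by move=> d T P A1 A2 B1 B2 C; exact: model2_expectation_A1A2B1B2.
- exists _, nat, (uniform_nat 7), a1, a2, b1, b2, c1.
  exists _, nat, (uniform_nat 7), a1, a2, b1, b2', c2.
  split; [exact: model1_spins | split; [exact: model2_spins |]].
  exact: spin_models_proper_subfamily_law.
Qed.
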